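(* Let $\varphi\in\mathfrak{sl}(2,\mathbb C)$ and consider the linear map $M_\varphi:i\mathfrak{su}(2)\to i\mathfrak{su}(2)$, $M_\varphi\gamma=[\varphi^*,[\varphi,\gamma]]+[\varphi,[\varphi^*,\gamma]]$. Then $M_\varphi$ is invertible if and only if $[\varphi,\varphi^*]\neq0$, i.e. if and only if $\varphi$ is not normal. If $[\varphi,\varphi^*]=0$ for some $0\ne\varphi\in\mathfrak{sl}(2,\mathbb C)$, then $M_\varphi$ has a one-dimensional kernel.
   Context: $i\mathfrak{su}(2)$ denotes the hermitian trace-free $2\times2$ complex matrices, and $\varphi^*$ is the conjugate transpose of $\varphi$. *)

(* Complex numbers are R[i] for a real closed field R
   (R = the reals gives C). *)
From HB Require Import structures.
From mathcomp Require Import all_boot all_order all_algebra.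
From mathcomp Require Import complex.
Set Implicit Arguments. Unset Strict Implicit. Unset Printing Implicit Defensive.
Import Order.TTheory GRing.Theory Num.Theory.
Local Open Scope ring_scope.

Definition adjmx (R : rcfType) (A : 'M[R[i]]_2) : 'M[R[i]]_2 :=
  map_mx (@conjc R) A^T.

Definition comm_br (R : rcfType) (A B : 'M[R[i]]_2) : 'M[R[i]]_2 :=
  A *m B - B *m A.

Definition in_sl2 (R : rcfType) (A : 'M[R[i]]_2) : Prop := \tr A = 0.

Definition in_isu2 (R : rcfType) (A : 'M[R[i]]_2) : Prop :=
  adjmx A = A /\ \tr A = 0.

Definition Mphi (R : rcfType) (phi gamma : 'M[R[i]]_2) : 'M[R[i]]_2 :=
  comm_br (adjmx phi) (comm_br phi gamma) + comm_br phi (comm_br (adjmx phi) gamma).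

Definition invertible_on_isu2 (R : rcfType) (f : 'M[R[i]]_2 -> 'M[R[i]]_2) : Prop :=
  (forall g, in_isu2 g -> in_isu2 (f g)) /\
  (forall g1 g2, in_isu2 g1 -> in_isu2 g2 -> f g1 = f g2 -> g1 = g2) /\
  (forall d, in_isu2 d -> exists2 g, in_isu2 g & f g = d).

(* the kernel of f restricted to i su(2) (a real vector space) is
   one-dimensional over R: spanned by a single nonzero element *)
Definition one_dim_kernel_isu2 (R : rcfType) (f : 'M[R[i]]_2 -> 'M[R[i]]_2) : Prop :=
  exists g0, [/\ in_isu2 g0, g0 != 0, f g0 = 0 &
    forall g, in_isu2 g -> f g = 0 -> exists r : R, g = (r%:C)%C *: g0].

From HB Require Import structures.
From mathcomp Require Import all_boot all_order all_algebra.
From mathcomp Require Import complex.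
From mathcomp Require Import ring lra.
Set Implicit Arguments. Unset Strict Implicit. Unset Printing Implicit Defensive.
Import Order.TTheory GRing.Theory Num.Theory.
Local Open Scope ring_scope.

(* In Pauli coordinates, i su(2) is R^3 via g |-> g1 s1 + g2 s2 + g3 s3, and
   phi in sl(2,C) is u.s + i v.s for u, v in R^3.  Then [phi, phi^*] = 4 (u x v).s
   and M_phi (g.s) = 8 (T g).s with T g = (|u|^2 + |v|^2) g - (u.g) u - (v.g) v.
   Lagrange's identity gives g.(T g) = |u x g|^2 + |v x g|^2, so T g = 0 forces g
   to be parallel to both u and v: T is injective iff u x v <> 0, and if u x v = 0
   its kernel is the line spanned by whichever of u, v is nonzero. *)

Section Vec3.
Variable R : realFieldType.
Local Notation vec := (R * R * R)%type.
Implicit Types (r : R) (u v g h x y : vec).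

Definition dotv u g : R :=
  let: (u1, u2, u3) := u in let: (g1, g2, g3) := g in u1 * g1 + u2 * g2 + u3 * g3.

Definition crossv u g : vec :=
  let: (u1, u2, u3) := u in let: (g1, g2, g3) := g in
  (u2 * g3 - u3 * g2, u3 * g1 - u1 * g3, u1 * g2 - u2 * g1).

Definition scalev r g : vec := let: (g1, g2, g3) := g in (r * g1, r * g2, r * g3).

Definition Mvec u v g : vec :=
  scalev (dotv u u + dotv v v) g - scalev (dotv u g) u - scalev (dotv v g) v.

Lemma vec3D a1 a2 a3 b1 b2 b3 :
  (a1, a2, a3) + (b1, b2, b3) = (a1 + b1, a2 + b2, a3 + b3) :> vec.
Proof. by []. Qed.

Lemma vec3N a1 a2 a3 : - (a1, a2, a3) = (- a1, - a2, - a3) :> vec.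
Proof. by []. Qed.

Ltac coords :=
  rewrite /Mvec /dotv /crossv /scalev; cbv beta iota; rewrite ?(vec3D, vec3N) /=;
  try (congr (_, _, _)); ring.

Lemma scalevA r1 r2 g : scalev r1 (scalev r2 g) = scalev (r1 * r2) g.
Proof. by case: g => [[g1 g2] g3]; coords. Qed.

Lemma scale1v g : scalev 1 g = g.
Proof. by case: g => [[g1 g2] g3]; coords. Qed.

Lemma scalev0 r : scalev r 0 = 0.
Proof. coords. Qed.

Lemma scalevK r : r != 0 -> cancel (scalev r) (scalev r^-1).
Proof. by move=> r_neq0 g; rewrite scalevA mulVf // scale1v. Qed.

Lemma scalevI r : r != 0 -> injective (scalev r).
Proof. by move=> /scalevK /can_inj. Qed.

Lemma scalev_eq0 r g : r != 0 -> (scalev r g == 0) = (g == 0).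
Proof. by move=> r_neq0; rewrite -{1}(scalev0 r) (inj_eq (scalevI r_neq0)). Qed.

Lemma dotvv_ge0 g : 0 <= dotv g g.
Proof. by case: g => [[g1 g2] g3] /=; rewrite !addr_ge0 // -expr2 sqr_ge0. Qed.

Lemma dotvv_eq0 g : (dotv g g == 0) = (g == 0).
Proof.
apply/eqP/eqP => [|->]; last coords.
by case: g => [[g1 g2] g3] /= g_eq0; congr (_, _, _); nra.
Qed.

Lemma dotv0 g : dotv g 0 = 0.
Proof. by case: g => [[g1 g2] g3]; coords. Qed.

Lemma crossv0 u : crossv u 0 = 0.
Proof. by case: u => [[u1 u2] u3]; coords. Qed.

Lemma crossvC u g : crossv g u = - crossv u g.
Proof. by case: u g => [[u1 u2] u3] [[g1 g2] g3]; coords. Qed.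

Lemma crossvZZ r1 r2 g : crossv (scalev r1 g) (scalev r2 g) = 0.
Proof. by case: g => [[g1 g2] g3]; coords. Qed.

(* Lagrange's identity |u|^2 |g|^2 - (u.g)^2 = |u x g|^2, for u and v at once. *)
Lemma dotv_Mvec u v g :
  dotv g (Mvec u v g) = dotv (crossv u g) (crossv u g) + dotv (crossv v g) (crossv v g).
Proof. by case: u v g => [[u1 u2] u3] [[v1 v2] v3] [[g1 g2] g3]; coords. Qed.

Lemma crossv_eq0 u g : u != 0 -> crossv u g = 0 -> g = scalev (dotv u g / dotv u u) u.
Proof.
rewrite -dotvv_eq0 => uu_neq0 ug0.
have expand : scalev (dotv u u) g = scalev (dotv u g) u - crossv u (crossv u g).
  by case: u g {uu_neq0 ug0} => [[u1 u2] u3] [[g1 g2] g3]; coords.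
rewrite ug0 crossv0 subr0 in expand.
by apply: (scalevI uu_neq0); rewrite expand scalevA mulrCA mulfV // mulr1.
Qed.

Lemma Mvec_eq0 u v g : Mvec u v g = 0 -> crossv u g = 0 /\ crossv v g = 0.
Proof.
move=> Mg0; have := dotv_Mvec u v g; rewrite Mg0 dotv0 => /esym/eqP.
by rewrite paddr_eq0 ?dotvv_ge0 // !dotvv_eq0 => /andP[/eqP ug0 /eqP vg0].
Qed.

Lemma Mvec_ker0 u v g : crossv u v != 0 -> Mvec u v g = 0 -> g = 0.
Proof.
move=> w_neq0 /Mvec_eq0[ug0 vg0]; apply/eqP; apply: contraNT w_neq0 => g_neq0.
have gu0 : crossv g u = 0 by rewrite crossvC ug0 oppr0.
have gv0 : crossv g v = 0 by rewrite crossvC vg0 oppr0.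
by rewrite (crossv_eq0 g_neq0 gu0) (crossv_eq0 g_neq0 gv0) crossvZZ.
Qed.

Lemma MvecB u v g h : Mvec u v (g - h) = Mvec u v g - Mvec u v h.
Proof.
by case: u v g h => [[u1 u2] u3] [[v1 v2] v3] [[g1 g2] g3] [[h1 h2] h3]; coords.
Qed.

Lemma MvecZ u v r g : Mvec u v (scalev r g) = scalev r (Mvec u v g).
Proof. by case: u v g => [[u1 u2] u3] [[v1 v2] v3] [[g1 g2] g3]; coords. Qed.

Lemma Mvec0 u v : Mvec u v 0 = 0.
Proof. by case: u v => [[u1 u2] u3] [[v1 v2] v3]; coords. Qed.

Lemma MvecC u v g : Mvec u v g = Mvec v u g.
Proof. by case: u v g => [[u1 u2] u3] [[v1 v2] v3] [[g1 g2] g3]; coords. Qed.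

Lemma Mvec_inj u v : crossv u v != 0 -> injective (Mvec u v).
Proof.
move=> w_neq0 g h /eqP; rewrite -subr_eq0 -MvecB => /eqP /(Mvec_ker0 w_neq0) /eqP.
by rewrite subr_eq0 => /eqP.
Qed.

(* Mvec u v = s - P with P y = (u.y) u + (v.y) v.  On the plane of u and v, P has
   trace s and determinant |w|^2, so (s - P) P = |w|^2 there (Cayley-Hamilton);
   along w = u x v, P vanishes and Mvec u v is multiplication by s. *)
Lemma Mvec_adjugate u v y :
  let s := dotv u u + dotv v v in let w := crossv u v in
  Mvec u v (scalev s (scalev (dotv u y) u + scalev (dotv v y) v) + scalev (dotv w y) w)
  = scalev (s * dotv w w) y.
Proof. by case: u v y => [[u1 u2] u3] [[v1 v2] v3] [[y1 y2] y3]; coords. Qed.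

Lemma Mvec_surj u v : crossv u v != 0 -> forall y, exists g, Mvec u v g = y.
Proof.
move=> w_neq0 y; have := Mvec_adjugate u v y; cbv zeta.
set s := dotv u u + dotv v v; set w := crossv u v; set z := scalev s _ + _ => Mz.
have s_neq0 : s != 0.
  apply: contraNneq w_neq0 => /eqP; rewrite paddr_eq0 ?dotvv_ge0 // !dotvv_eq0.
  by case/andP => /eqP -> _; rewrite /w crossvC crossv0 oppr0.
have sw_neq0 : s * dotv w w != 0 by rewrite mulf_neq0 // dotvv_eq0.
by exists (scalev (s * dotv w w)^-1 z); rewrite MvecZ Mz scalevA mulVf // scale1v.
Qed.

Lemma Mvec_self u v : Mvec u v u = crossv v (crossv u v).
Proof. by case: u v => [[u1 u2] u3] [[v1 v2] v3]; coords. Qed.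

Lemma Mvec_ker_line u v : crossv u v = 0 -> u != 0 \/ v != 0 ->
  exists2 x, x != 0 &
    Mvec u v x = 0 /\ forall g, Mvec u v g = 0 -> exists r, g = scalev r x.
Proof.
have line x y : crossv x y = 0 -> x != 0 ->
    Mvec x y x = 0 /\ forall g, Mvec x y g = 0 -> exists r, g = scalev r x.
  move=> xy0 x_neq0; rewrite Mvec_self xy0 crossv0; split=> // g /Mvec_eq0[xg0 _].
  by exists (dotv x g / dotv x x); apply: crossv_eq0.
move=> w0 [u_neq0|v_neq0]; first by exists u => //; apply: line.
have vu0 : crossv v u = 0 by rewrite crossvC w0 oppr0.
have [vv0 ker] := line v u vu0 v_neq0.
by exists v => //; split=> [|g]; rewrite MvecC //; apply: ker.
Qed.

Lemma Mvec_ker_nontrivial u v : crossv u v = 0 -> exists2 x, x != 0 & Mvec u v x = 0.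
Proof.
move=> w0; have [u0|u_neq0] := eqVneq u 0; last first.
  by have [x ? []] := Mvec_ker_line w0 (or_introl u_neq0); exists x.
have [v0|v_neq0] := eqVneq v 0; last first.
  by have [x ? []] := Mvec_ker_line w0 (or_intror v_neq0); exists x.
exists (1, 0, 0); last by rewrite u0 v0; coords.
by apply/eqP => -[/eqP]; rewrite oner_eq0.
Qed.

End Vec3.

Section Pauli.
Variable R : rcfType.
Local Notation C := R[i].
Local Notation vec := (R * R * R)%type.
Implicit Types (a b c d : C) (u v g : vec).

Definition M2 a b c d : 'M[C]_2 :=
  \matrix_(i, j) if i == 0 then if j == 0 then a else b else if j == 0 then c else d.

Ltac entrywise := apply/matrixP => -[[|[|//]] ?] -[[|[|//]] ?]; rewrite !mxE.

Lemma M2E (A : 'M[C]_2) : A = M2 (A 0 0) (A 0 1) (A 1 0) (A 1 1).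
Proof. by entrywise; congr (A _ _); apply: val_inj. Qed.

Lemma M2_inj a b c d a' b' c' d' :
  M2 a b c d = M2 a' b' c' d' -> [/\ a = a', b = b', c = c' & d = d'].
Proof.
by move/matrixP=> E; split; [have := E 0 0 | have := E 0 1 | have := E 1 0 | have := E 1 1];
  rewrite !mxE.
Qed.

Lemma M2_tr a b c d : \tr (M2 a b c d) = a + d.
Proof. by rewrite /mxtrace !big_ord_recr big_ord0 /= !mxE add0r. Qed.

Lemma M2_adj a b c d : adjmx (M2 a b c d) = M2 a^*%C c^*%C b^*%C d^*%C.
Proof. by entrywise. Qed.

Lemma M2_add a b c d a' b' c' d' :
  M2 a b c d + M2 a' b' c' d' = M2 (a + a') (b + b') (c + c') (d + d').
Proof. by entrywise. Qed.

Lemma M2_opp a b c d : - M2 a b c d = M2 (- a) (- b) (- c) (- d).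
Proof. by entrywise. Qed.

Lemma M2_scale k a b c d : k *: M2 a b c d = M2 (k * a) (k * b) (k * c) (k * d).
Proof. by entrywise. Qed.

Lemma M2_mul a b c d a' b' c' d' : M2 a b c d *m M2 a' b' c' d' =
  M2 (a * a' + b * c') (a * b' + b * d') (c * a' + d * c') (c * b' + d * d').
Proof.
by apply/matrixP => -[[|[|//]] ?] -[[|[|//]] ?];
  rewrite !mxE !big_ord_recr big_ord0 /= !mxE add0r.
Qed.

Definition pauli g : 'M[C]_2 :=
  let: (g1, g2, g3) := g in M2 g3%:C%C (g1 -i* g2)%C (g1 +i* g2)%C (- g3)%:C%C.

Definition sl2_pauli u v : 'M[C]_2 := pauli u + 'i%C *: pauli v.

Lemma cplxD (x1 y1 x2 y2 : R) :
  (x1 +i* y1)%C + (x2 +i* y2)%C = ((x1 + x2) +i* (y1 + y2))%C :> C.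
Proof. by []. Qed.

Lemma cplxN (x y : R) : - (x +i* y)%C = (- x +i* - y)%C :> C.
Proof. by []. Qed.

Lemma cplxM (x1 y1 x2 y2 : R) :
  (x1 +i* y1)%C * (x2 +i* y2)%C = ((x1 * x2 - y1 * y2) +i* (x1 * y2 + y1 * x2))%C :> C.
Proof. by []. Qed.

Lemma cplxJ (x y : R) : (x +i* y)%C^*%C = (x +i* - y)%C :> C.
Proof. by []. Qed.

Ltac pauli_coords :=
  rewrite /Mphi /comm_br /sl2_pauli /pauli /Mvec /dotv /crossv /scalev;
  cbv beta iota; rewrite ?(vec3D, vec3N) /= -?complexr0;
  rewrite !(M2_adj, M2_mul, M2_opp, M2_add, M2_scale); congr M2;
  rewrite !(cplxD, cplxN, cplxM, cplxJ); congr Complex; ring.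

Lemma comm_sl2_pauli u v :
  comm_br (sl2_pauli u v) (adjmx (sl2_pauli u v)) = pauli (scalev 4 (crossv u v)).
Proof. by case: u v => [[u1 u2] u3] [[v1 v2] v3]; pauli_coords. Qed.

Lemma Mphi_pauli u v g :
  Mphi (sl2_pauli u v) (pauli g) = pauli (scalev 8 (Mvec u v g)).
Proof. by case: u v g => [[u1 u2] u3] [[v1 v2] v3] [[g1 g2] g3]; pauli_coords. Qed.

Lemma pauli_isu2 g : in_isu2 (pauli g).
Proof.
case: g => [[g1 g2] g3]; split; last by rewrite M2_tr -!complexr0 cplxD addrN addr0.
by rewrite M2_adj -!complexr0 !cplxJ opprK oppr0.
Qed.

Lemma pauli_inj : injective pauli.
Proof. by move=> [[g1 g2] g3] [[h1 h2] h3] /M2_inj[[->] [-> /oppr_inj->] _ _]. Qed.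

Lemma pauli0 : pauli 0 = 0.
Proof. by apply/matrixP => -[[|[|//]] ?] -[[|[|//]] ?]; rewrite !mxE //= oppr0. Qed.

Lemma pauli_eq0 g : (pauli g == 0) = (g == 0).
Proof. by rewrite -pauli0 (inj_eq pauli_inj). Qed.

Lemma pauliZ r g : pauli (scalev r g) = r%:C%C *: pauli g.
Proof. by case: g => [[g1 g2] g3]; pauli_coords. Qed.

Lemma isu2_pauliP G : in_isu2 G -> exists g, G = pauli g.
Proof.
case; rewrite [G]M2E M2_adj M2_tr.
case: (G 0 0) (G 0 1) (G 1 0) (G 1 1) => a1 a2 [b1 b2] [c1 c2] [d1 d2].
rewrite !cplxJ cplxD => /M2_inj[[a2N] [bc1 bc2] _ _] [ad1 ad2].
exists (c1, c2, a1); rewrite /pauli -!complexr0; congr M2; congr Complex; lra.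
Qed.

Lemma sl2_pauliP phi : in_sl2 phi -> exists u v, phi = sl2_pauli u v.
Proof.
rewrite /in_sl2 [phi]M2E M2_tr.
case: (phi 0 0) (phi 0 1) (phi 1 0) (phi 1 1) => a1 a2 [b1 b2] [c1 c2] [d1 d2].
rewrite cplxD => -[ad1 ad2].
have -> : d1 = - a1 by lra.
have -> : d2 = - a2 by lra.
exists ((b1 + c1) / 2, (c2 - b2) / 2, a1), ((b2 + c2) / 2, (b1 - c1) / 2, a2).
rewrite /sl2_pauli /pauli -!complexr0 M2_scale M2_add.
by congr M2; rewrite !(cplxD, cplxM); congr Complex; field.
Qed.

Lemma Mphi_pauli_eq0 u v g :
  (Mphi (sl2_pauli u v) (pauli g) == 0) = (Mvec u v g == 0).
Proof. by rewrite Mphi_pauli pauli_eq0 scalev_eq0 // pnatr_eq0. Qed.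

Lemma Mphi_isu2 u v G : in_isu2 G -> in_isu2 (Mphi (sl2_pauli u v) G).
Proof. by move=> /isu2_pauliP[g ->]; rewrite Mphi_pauli; apply: pauli_isu2. Qed.

Lemma Mphi_invertible u v :
  crossv u v != 0 -> invertible_on_isu2 (Mphi (sl2_pauli u v)).
Proof.
have eight_neq0 : 8 != 0 :> R by rewrite pnatr_eq0.
move=> w_neq0; split; first exact: Mphi_isu2.
split=> [_ _ /isu2_pauliP[g ->] /isu2_pauliP[h ->]|_ /isu2_pauliP[y ->]].
  by rewrite !Mphi_pauli => /pauli_inj /(scalevI eight_neq0) /(Mvec_inj w_neq0) ->.
have [g Mg] := Mvec_surj w_neq0 (scalev 8^-1 y).
exists (pauli g); first exact: pauli_isu2.
by rewrite Mphi_pauli Mg scalevA mulfV // scale1v.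
Qed.

Lemma Mphi_not_invertible u v :
  crossv u v = 0 -> ~ invertible_on_isu2 (Mphi (sl2_pauli u v)).
Proof.
move=> w0 [_ [Mphi_inj _]]; have [x x_neq0 Mx0] := Mvec_ker_nontrivial w0.
have := Mphi_inj (pauli x) (pauli 0) (pauli_isu2 _) (pauli_isu2 _).
rewrite !Mphi_pauli Mx0 Mvec0 => /(_ erefl) /pauli_inj x0.
by rewrite x0 eqxx in x_neq0.
Qed.

Lemma Mphi_one_dim_kernel u v :
  crossv u v = 0 -> sl2_pauli u v != 0 -> one_dim_kernel_isu2 (Mphi (sl2_pauli u v)).
Proof.
move=> w0 phi_neq0; have uv_neq0 : u != 0 \/ v != 0.
  have [u0|] := eqVneq u 0; last by left.
  have [v0|] := eqVneq v 0; last by right.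
  by rewrite u0 v0 /sl2_pauli pauli0 scaler0 addr0 eqxx in phi_neq0.
have [x x_neq0 [Mx0 ker]] := Mvec_ker_line w0 uv_neq0.
exists (pauli x); split; first exact: pauli_isu2.
- by rewrite pauli_eq0.
- by apply/eqP; rewrite Mphi_pauli_eq0 Mx0.
move=> _ /isu2_pauliP[g ->] /eqP; rewrite Mphi_pauli_eq0 => /eqP /ker[r ->].
by exists r; apply: pauliZ.
Qed.

End Pauli.

Theorem lemma3p7 (R : rcfType) (phi : 'M[R[i]]_2) :
  in_sl2 phi ->
  (invertible_on_isu2 (Mphi phi) <-> comm_br phi (adjmx phi) != 0) /\
  (phi != 0 -> comm_br phi (adjmx phi) = 0 -> one_dim_kernel_isu2 (Mphi phi)).
Proof.
move=> /sl2_pauliP[u [v ->]].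
have comm_eq0 : (comm_br (sl2_pauli u v) (adjmx (sl2_pauli u v)) == 0) = (crossv u v == 0).
  by rewrite comm_sl2_pauli pauli_eq0 scalev_eq0 // pnatr_eq0.
rewrite comm_eq0; split.
  split=> [inv|]; last exact: Mphi_invertible.
  by apply/eqP => w0; apply: Mphi_not_invertible inv.
by move=> phi_neq0 /eqP; rewrite comm_eq0 => /eqP w0; apply: Mphi_one_dim_kernel.
Qed.
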